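(* Let $G$ be a finitely generated group and $H\le K\le G$ subgroups such that $H\backslash G$ is narrow. Then either $[G:K]<\infty$ or $[K:H]<\infty$.
   Context: $H\backslash G$ is narrow if the Schreier coset graph $H\backslash\mathrm{Cay}(G,S)$ (quotient of the Cayley graph by the left $H$-action, edges of length 1) is narrow for some (equivalently any) finite generating set $S$. An unbounded connected graph $Y$ is narrow if for each $\mu\ge1$ there is $L(\mu)$ such that any $L(\mu)+1$ unbounded $\mu$-coarsely connected vertex subsets of $Y$ include two that intersect (a vertex subset $Z$ is $\mu$-coarsely connected if any two points of $Z$ are joined by a chain in $Z$ with consecutive distances at most $\mu$). *)

From Stdlib Require Import List Arith.
Import ListNotations.

Record Group : Type := {
  carrier :> Type;
  gmul : carrier -> carrier -> carrier;
  ginv : carrier -> carrier;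
  gone : carrier;
  gmul_assoc : forall x y z, gmul x (gmul y z) = gmul (gmul x y) z;
  gmul_one_l : forall x, gmul gone x = x;
  gmul_one_r : forall x, gmul x gone = x;
  gmul_inv_l : forall x, gmul (ginv x) x = gone;
  gmul_inv_r : forall x, gmul x (ginv x) = gone
}.

Section Defs.
Variable G : Group.

Definition is_subgroup (H : G -> Prop) : Prop :=
  H (gone G) /\
  (forall x y, H x -> H y -> H (gmul G x y)) /\
  (forall x, H x -> H (ginv G x)).

Inductive generated (S : list G) : G -> Prop :=
| gen_one : generated S (gone G)
| gen_mul : forall x s, generated S x -> In s S -> generated S (gmul G x s)
| gen_mul_inv : forall x s, generated S x -> In s S ->
    generated S (gmul G x (ginv G s)).

Definition generates (S : list G) : Prop := forall g, generated S g.

Definition finitely_generated : Prop := exists S : list G, generates S.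

(* [G : K] < oo : finitely many right cosets K r cover G *)
Definition finite_index (K : G -> Prop) : Prop :=
  exists l : list G, forall g, exists r, In r l /\ K (gmul G g (ginv G r)).

(* [K : H] < oo : finitely many right cosets H r (r in K) cover K *)
Definition finite_index_in (K H : G -> Prop) : Prop :=
  exists l : list G, (forall r, In r l -> K r) /\
    forall k, K k -> exists r, In r l /\ H (gmul G k (ginv G r)).

(* Schreier coset graph H\Cay(G,S); the vertex Hx is represented by any x.  *)
Definition same_coset (H : G -> Prop) (x y : G) : Prop :=
  H (gmul G x (ginv G y)).

Definition coset_adj (H : G -> Prop) (S : list G) (x y : G) : Prop :=
  exists s, In s S /\
    (same_coset H y (gmul G x s) \/ same_coset H y (gmul G x (ginv G s))).

Inductive coset_walk (H : G -> Prop) (S : list G) : G -> G -> nat -> Prop :=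
| walk_nil : forall x y, same_coset H x y -> coset_walk H S x y 0
| walk_cons : forall x y z n, coset_walk H S x y n -> coset_adj H S y z ->
    coset_walk H S x z (Datatypes.S n).

Definition coset_dist_le (H : G -> Prop) (S : list G) (x y : G) (n : nat) : Prop :=
  exists m, m <= n /\ coset_walk H S x y m.

(* Z is a vertex subset of H\G: a predicate on G saturated under cosets *)
Definition vertex_subset (H : G -> Prop) (Z : G -> Prop) : Prop :=
  forall x y, Z x -> same_coset H x y -> Z y.

Definition unbounded (H : G -> Prop) (S : list G) (Z : G -> Prop) : Prop :=
  forall R : nat, exists x y, Z x /\ Z y /\ ~ coset_dist_le H S x y R.

Inductive coarse_chain (H : G -> Prop) (S : list G) (Z : G -> Prop) (mu : nat)
  : G -> G -> Prop :=
| chain_nil : forall x, Z x -> coarse_chain H S Z mu x x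
| chain_cons : forall x y z, coarse_chain H S Z mu x y -> Z z ->
    coset_dist_le H S y z mu -> coarse_chain H S Z mu x z.

Definition coarsely_connected (H : G -> Prop) (S : list G) (mu : nat)
  (Z : G -> Prop) : Prop :=
  forall x y, Z x -> Z y -> coarse_chain H S Z mu x y.

Definition narrow_graph (H : G -> Prop) (S : list G) : Prop :=
  unbounded H S (fun _ => True) /\
  forall mu : nat, 1 <= mu -> exists L : nat,
    forall Zs : nat -> (G -> Prop),
      (forall i, i <= L -> vertex_subset H (Zs i) /\ unbounded H S (Zs i) /\
                           coarsely_connected H S mu (Zs i)) ->
      exists i j, i <= L /\ j <= L /\ i <> j /\
        exists x, Zs i x /\ Zs j x.

Definition narrow_coset_space (H : G -> Prop) : Prop :=
  exists S : list G, generates S /\ narrow_graph H S.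

End Defs.

From Stdlib Require Import List Arith Lia Classical.
Import ListNotations.

(* Suppose [G : K] and [K : H] are both infinite.  Number the words in a
   finite generating set S and let T be the set of words whose index is least
   in their right K-coset; T is a prefix-closed transversal of K\G.  For k in K
   the vertex set H k T of H\Cay(G,S) is 1-coarsely connected (every vertex is
   joined to Hk along the prefixes of its word) and unbounded (otherwise the
   finitely many elements of a ball would meet every K-coset).  As H <= K, the
   sets H k T and H k' T meet only if Hk = Hk', so infinitely many H-cosets in
   K yield arbitrarily many pairwise disjoint such sets, contradicting
   narrowness. *)

Section Narrow.

Variable G : Group.

Local Notation "x · y" := (gmul G x y) (at level 40, left associativity).
Local Notation "x ⁻¹" := (ginv G x) (at level 3, format "x ⁻¹").

Lemma ginv_mul (x y : G) : (x · y)⁻¹ = y⁻¹ · x⁻¹.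
Proof.
  assert (E : x · y · (y⁻¹ · x⁻¹) = gone G).
  { rewrite <- gmul_assoc, (gmul_assoc G y), gmul_inv_r, gmul_one_l, gmul_inv_r.
    reflexivity. }
  rewrite <- (gmul_one_r G (x · y)⁻¹), <- E, gmul_assoc, gmul_inv_l, gmul_one_l.
  reflexivity.
Qed.

Lemma ginv_involutive (x : G) : x⁻¹⁻¹ = x.
Proof.
  rewrite <- (gmul_one_r G x⁻¹⁻¹), <- (gmul_inv_l G x), gmul_assoc, gmul_inv_l,
    gmul_one_l.
  reflexivity.
Qed.

Lemma same_coset_mulr (P : G -> Prop) x y g :
  same_coset G P x y -> same_coset G P (x · g) (y · g).
Proof.
  unfold same_coset.
  rewrite ginv_mul, <- gmul_assoc, (gmul_assoc G g), gmul_inv_r, gmul_one_l.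
  auto.
Qed.

Lemma same_coset_mulr_inv (P : G -> Prop) x y g :
  same_coset G P (x · g) (y · g) -> same_coset G P x y.
Proof.
  unfold same_coset.
  rewrite ginv_mul, <- gmul_assoc, (gmul_assoc G g), gmul_inv_r, gmul_one_l.
  auto.
Qed.

Lemma same_coset_mull (P : G -> Prop) k x : P k -> same_coset G P (k · x) x.
Proof. unfold same_coset. rewrite <- gmul_assoc, gmul_inv_r, gmul_one_r. auto. Qed.

Lemma same_coset_mono (P Q : G -> Prop) x y :
  (forall z, P z -> Q z) -> same_coset G P x y -> same_coset G Q x y.
Proof. unfold same_coset. auto. Qed.

Section SubgroupCosets.

Variable P : G -> Prop.
Hypothesis subgroupP : is_subgroup G P.

Lemma same_coset_refl x : same_coset G P x x.
Proof. destruct subgroupP as [P1 _]. unfold same_coset. rewrite gmul_inv_r. exact P1. Qed.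

Lemma same_coset_sym x y : same_coset G P x y -> same_coset G P y x.
Proof.
  destruct subgroupP as [_ [_ Pinv]]. unfold same_coset. intros Pxy.
  apply Pinv in Pxy. rewrite ginv_mul, ginv_involutive in Pxy. exact Pxy.
Qed.

Lemma same_coset_trans x y z :
  same_coset G P x y -> same_coset G P y z -> same_coset G P x z.
Proof.
  destruct subgroupP as [_ [Pmul _]]. unfold same_coset. intros Pxy Pyz.
  pose proof (Pmul _ _ Pxy Pyz) as Pxz.
  rewrite <- gmul_assoc, (gmul_assoc G y⁻¹), gmul_inv_l, gmul_one_l in Pxz.
  exact Pxz.
Qed.

Lemma same_coset_mull_l k x y : P k -> same_coset G P (k · x) y -> same_coset G P x y.
Proof.
  intros Pk. apply same_coset_trans. apply same_coset_sym. now apply same_coset_mull.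
Qed.

Lemma same_coset_mull_r k x y : P k -> same_coset G P x (k · y) -> same_coset G P x y.
Proof. intros Pk xy. eapply same_coset_trans; [exact xy | now apply same_coset_mull]. Qed.

End SubgroupCosets.

Section Words.

Variable S : list G.

Definition letter (r : nat) : G :=
  if r <? length S then nth r S (gone G) else (nth (r - length S) S (gone G))⁻¹.

(* Words are numbered in base 2|S|: word n+1 is word (n / 2|S|) followed by
   letter (n mod 2|S|).  The parent of a word thus has a smaller index, which
   makes least-index coset representatives prefix-closed.  The fuel f >= n
   only serves to make the recursion structural. *)
Fixpoint word_fuel (f n : nat) : G :=
  match f, n with
  | Datatypes.S f', Datatypes.S m =>
      word_fuel f' (m / (2 * length S)) · letter (m mod (2 * length S))
  | _, _ => gone G
  end.

Definition word (n : nat) : G := word_fuel n n.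

Lemma word_parent_lt m : m / (2 * length S) < Datatypes.S m.
Proof.
  destruct S as [|s S']; cbn [length]; [cbn; lia|].
  apply Nat.lt_succ_r, Nat.Div0.div_le_upper_bound. nia.
Qed.

Lemma word_fuel_enough f1 f2 n :
  n <= f1 -> n <= f2 -> word_fuel f1 n = word_fuel f2 n.
Proof.
  revert f2 n. induction f1 as [|f1 IH];
    intros [|f2] [|m] le1 le2; cbn [word_fuel]; try lia; try reflexivity.
  f_equal. apply IH; pose proof (word_parent_lt m); lia.
Qed.

Lemma word_S m :
  word (Datatypes.S m) = word (m / (2 * length S)) · letter (m mod (2 * length S)).
Proof.
  unfold word at 1. cbn [word_fuel]. f_equal.
  apply word_fuel_enough; pose proof (word_parent_lt m); lia.
Qed.

Lemma letter_spec r : r < 2 * length S ->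
  exists s, In s S /\ (letter r = s \/ letter r = s⁻¹).
Proof.
  intros lt_r. unfold letter. destruct (Nat.ltb_spec r (length S)).
  - exists (nth r S (gone G)). split; [apply nth_In|]; auto.
  - exists (nth (r - length S) S (gone G)). split; [apply nth_In; lia|]; auto.
Qed.

Lemma word_append n r : r < 2 * length S ->
  word (Datatypes.S (n * (2 * length S) + r)) = word n · letter r.
Proof.
  intros lt_r. rewrite word_S. f_equal; f_equal.
  - symmetry. apply (Nat.div_unique _ _ _ r); lia.
  - symmetry. apply (Nat.mod_unique _ _ n); lia.
Qed.

Lemma word_surjective g : generated G S g -> exists n, word n = g.
Proof.
  induction 1 as [|x s _ [n <-] inS|x s _ [n <-] inS];
    [now exists 0| |]; destruct (In_nth _ _ (gone G) inS) as [r [lt_r <-]].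
  - exists (Datatypes.S (n * (2 * length S) + r)). rewrite word_append by lia.
    unfold letter. destruct (Nat.ltb_spec r (length S)); [reflexivity | lia].
  - exists (Datatypes.S (n * (2 * length S) + (length S + r))).
    rewrite word_append by lia. unfold letter.
    destruct (Nat.ltb_spec (length S + r) (length S)); [lia|].
    now replace (length S + r - length S) with r by lia.
Qed.

Fixpoint ball (r : nat) : list G :=
  match r with
  | 0 => [gone G]
  | Datatypes.S r' =>
      ball r' ++ flat_map (fun x => map (fun s => x · s) S ++ map (fun s => x · s⁻¹) S)
                          (ball r')
  end.

Lemma ball_mono n r w : n <= r -> In w (ball n) -> In w (ball r).
Proof.
  induction r as [|r IH]; intros le_nr inw.
  - now replace n with 0 in inw by lia.
  - destruct (Nat.eq_dec n (Datatypes.S r)) as [->|ne]; [exact inw|].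
    cbn. apply in_or_app. left. apply IH; [lia | exact inw].
Qed.

Section SchreierGraph.

Variable H : G -> Prop.
Hypothesis subgroupH : is_subgroup G H.

Lemma coset_walk_ball x z n : coset_walk G H S x z n ->
  exists w, In w (ball n) /\ same_coset G H z (x · w).
Proof.
  induction 1 as [x y xy|x y z n _ [w [inw yw]] [s [inS [zy|zy]]]].
  - exists (gone G). rewrite gmul_one_r. split; [now left | now apply same_coset_sym].
  - exists (w · s). split.
    + cbn. apply in_or_app. right. apply in_flat_map. exists w. split; [exact inw|].
      apply in_or_app. left. apply in_map_iff. eauto.
    + rewrite gmul_assoc. eapply same_coset_trans; [exact subgroupH | exact zy |].
      now apply same_coset_mulr.
  - exists (w · s⁻¹). split.
    + cbn. apply in_or_app. right. apply in_flat_map. exists w. split; [exact inw|].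
      apply in_or_app. right. apply in_map_iff. eauto.
    + rewrite gmul_assoc. eapply same_coset_trans; [exact subgroupH | exact zy |].
      now apply same_coset_mulr.
Qed.

Lemma coset_dist_le_ball x z r : coset_dist_le G H S x z r ->
  exists w, In w (ball r) /\ same_coset G H z (x · w).
Proof.
  intros [m [le_mr walk]]. destruct (coset_walk_ball _ _ _ walk) as [w [inw zw]].
  exists w. split; [eapply ball_mono; eauto | exact zw].
Qed.

Lemma coset_dist_le_same_coset x y mu : same_coset G H x y -> coset_dist_le G H S x y mu.
Proof. intros xy. exists 0. split; [lia | now apply walk_nil]. Qed.

Lemma coset_adj_letter x r : r < 2 * length S ->
  coset_adj G H S x (x · letter r) /\ coset_adj G H S (x · letter r) x.
Proof.
  intros lt_r. destruct (letter_spec r lt_r) as [s [inS [-> | ->]]];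
    split; exists s; (split; [exact inS|]).
  - left. now apply same_coset_refl.
  - right. rewrite <- gmul_assoc, gmul_inv_r, gmul_one_r. now apply same_coset_refl.
  - right. now apply same_coset_refl.
  - left. rewrite <- gmul_assoc, gmul_inv_l, gmul_one_r. now apply same_coset_refl.
Qed.

Lemma coset_dist_le_adj x y : coset_adj G H S x y -> coset_dist_le G H S x y 1.
Proof.
  intros xy. exists 1. split; [lia|].
  eapply walk_cons; [apply walk_nil, same_coset_refl, subgroupH | exact xy].
Qed.

Lemma coarse_chain_trans Z mu x y z :
  coarse_chain G H S Z mu x y -> coarse_chain G H S Z mu y z ->
  coarse_chain G H S Z mu x z.
Proof.
  intros xy yz. induction yz as [y|y u z _ IH inz dist]; [exact xy|].
  eapply chain_cons; [apply IH, xy | exact inz | exact dist].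
Qed.

End SchreierGraph.

Section Transversal.

Variable K : G -> Prop.
Hypothesis subgroupK : is_subgroup G K.
Hypothesis S_nonempty : S <> [].

Definition least_in_coset (n : nat) : Prop :=
  forall m, m < n -> ~ same_coset G K (word m) (word n).

Lemma letter_index_lt m : m mod (2 * length S) < 2 * length S.
Proof. apply Nat.mod_upper_bound. destruct S; cbn; [congruence | lia]. Qed.

Lemma least_in_coset_0 : least_in_coset 0.
Proof. intros m lt_m. lia. Qed.

Lemma least_in_coset_parent m :
  least_in_coset (Datatypes.S m) -> least_in_coset (m / (2 * length S)).
Proof.
  intros least j lt_j Kj.
  pose proof (letter_index_lt m) as lt_r.
  pose proof (Nat.div_mod_eq m (2 * length S)).
  apply (least (Datatypes.S (j * (2 * length S) + m mod (2 * length S)))); [nia|].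
  rewrite word_append, word_S by exact lt_r. now apply same_coset_mulr.
Qed.

Lemma exists_least_in_coset g : generated G S g ->
  exists n, least_in_coset n /\ same_coset G K (word n) g.
Proof.
  intros gen_g. destruct (word_surjective g gen_g) as [n0 word_n0].
  assert (ex : exists n, same_coset G K (word n) g).
  { exists n0. rewrite word_n0. now apply same_coset_refl. }
  clear n0 word_n0. destruct ex as [n Kn]. revert Kn.
  induction n as [n IH] using lt_wf_ind. intros Kn.
  destruct (classic (exists m, m < n /\ same_coset G K (word m) g))
    as [[m [lt_m Km]] | none]; [now apply (IH m) |].
  exists n. split; [|exact Kn]. intros m lt_m Kmn.
  apply none. exists m. split; [exact lt_m|]. eapply same_coset_trans; eauto.
Qed.

Lemma least_in_coset_unique n m : least_in_coset n -> least_in_coset m ->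
  same_coset G K (word n) (word m) -> n = m.
Proof.
  intros least_n least_m Knm.
  destruct (lt_eq_lt_dec n m) as [[lt|eq]|lt]; [|exact eq|].
  - contradiction (least_m n lt).
  - contradiction (least_n m lt). now apply same_coset_sym.
Qed.

Section Cones.

Variable H : G -> Prop.
Hypothesis subgroupH : is_subgroup G H.
Hypothesis H_sub_K : forall x, H x -> K x.

(* The vertex set H k T, where T is the transversal of least words. *)
Definition cone (k : G) : G -> Prop :=
  fun z => exists n, least_in_coset n /\ same_coset G H z (k · word n).

Lemma cone_word k n : least_in_coset n -> cone k (k · word n).
Proof. intros least. exists n. split; [exact least | now apply same_coset_refl]. Qed.

Lemma cone_vertex_subset k : vertex_subset G H (cone k).
Proof.
  intros x y [n [least xn]] xy. exists n. split; [exact least|].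
  eapply same_coset_trans; [exact subgroupH | apply same_coset_sym; eauto | exact xn].
Qed.

Lemma cone_chain_root k n : least_in_coset n ->
  coarse_chain G H S (cone k) 1 (k · word 0) (k · word n) /\
  coarse_chain G H S (cone k) 1 (k · word n) (k · word 0).
Proof.
  induction n as [n IH] using lt_wf_ind. intros least.
  destruct n as [|m]; [split; apply chain_nil, cone_word, least |].
  pose proof (least_in_coset_parent m least) as least_parent.
  destruct (IH _ (word_parent_lt m) least_parent) as [down up].
  destruct (coset_adj_letter H subgroupH (k · word (m / (2 * length S)))
              _ (letter_index_lt m)) as [step_down step_up].
  rewrite word_S, gmul_assoc. split.
  - eapply chain_cons; [exact down | | now apply coset_dist_le_adj].
    rewrite <- gmul_assoc, <- word_S. now apply cone_word.
  - eapply coarse_chain_trans; [| exact up].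
    eapply chain_cons;
      [apply chain_nil | apply cone_word, least_parent | now apply coset_dist_le_adj].
    rewrite <- gmul_assoc, <- word_S. now apply cone_word.
Qed.

Lemma cone_coarsely_connected k : coarsely_connected G H S 1 (cone k).
Proof.
  intros x y xin yin.
  pose proof xin as [n [least_n xn]]. pose proof yin as [m [least_m ym]].
  destruct (cone_chain_root k n least_n) as [_ up].
  destruct (cone_chain_root k m least_m) as [down _].
  apply coarse_chain_trans with (y := k · word n).
  { eapply chain_cons; [apply chain_nil, xin | apply cone_word, least_n |].
    now apply coset_dist_le_same_coset. }
  apply coarse_chain_trans with (y := k · word 0); [exact up|].
  apply coarse_chain_trans with (y := k · word m); [exact down|].
  eapply chain_cons; [apply chain_nil, cone_word, least_m | exact yin |].
  apply coset_dist_le_same_coset. now apply same_coset_sym.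
Qed.

Lemma cone_bounded_finite_index k r : K k -> generates G S ->
  (forall n, least_in_coset n -> coset_dist_le G H S (k · word 0) (k · word n) r) ->
  finite_index G K.
Proof.
  intros Kk gen bounded. exists (ball r). intros g.
  destruct (exists_least_in_coset g (gen g)) as [n [least Kng]].
  destruct (coset_dist_le_ball H subgroupH _ _ r (bounded n least)) as [w [inw nw]].
  exists w. split; [exact inw|]. change (same_coset G K g w).
  assert (Knw : same_coset G K (word n) w).
  { rewrite gmul_one_r in nw. apply (same_coset_mono _ _ _ _ H_sub_K) in nw.
    eapply same_coset_mull_l, same_coset_mull_r in nw; eassumption. }
  apply (same_coset_trans _ subgroupK _ (word n)); [|exact Knw].
  now apply same_coset_sym.
Qed.

Lemma cone_unbounded k : K k -> generates G S -> ~ finite_index G K ->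
  unbounded G H S (cone k).
Proof.
  intros Kk gen infinite r. apply NNPP. intros bounded.
  apply infinite, (cone_bounded_finite_index k r Kk gen). intros n least.
  apply NNPP. intros far. apply bounded.
  exists (k · word 0), (k · word n).
  split; [apply cone_word, least_in_coset_0|]. split; [apply cone_word, least | exact far].
Qed.

Lemma cone_meet k1 k2 x : K k1 -> K k2 -> cone k1 x -> cone k2 x ->
  same_coset G H k1 k2.
Proof.
  intros Kk1 Kk2 [n [least_n xn]] [m [least_m xm]].
  assert (Hnm : same_coset G H (k1 · word n) (k2 · word m)).
  { eapply same_coset_trans; [exact subgroupH | apply same_coset_sym; eauto | exact xm]. }
  assert (Knm : same_coset G K (word n) (word m)).
  { apply (same_coset_mono _ _ _ _ H_sub_K) in Hnm.
    eapply same_coset_mull_l, same_coset_mull_r in Hnm; eassumption. }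
  rewrite <- (least_in_coset_unique n m least_n least_m Knm) in Hnm.
  exact (same_coset_mulr_inv _ _ _ _ Hnm).
Qed.

End Cones.

End Transversal.

End Words.

Lemma infinite_index_in_distinct_cosets (H K : G -> Prop) :
  is_subgroup G H -> ~ finite_index_in G K H ->
  forall N, exists l : list G, length l = N /\ (forall r, In r l -> K r) /\
    forall i j, i < N -> j < N -> i <> j ->
      ~ same_coset G H (nth i l (gone G)) (nth j l (gone G)).
Proof.
  intros subgroupH infinite N. induction N as [|N [l [len [inK distinct]]]].
  - exists []. repeat split; [intros r [] | intros; lia].
  - assert (new : exists k, K k /\ forall r, In r l -> ~ same_coset G H k r).
    { apply NNPP. intros none. apply infinite. exists l. split; [exact inK|].
      intros k Kk. apply NNPP. intros far. apply none. exists k. split; [exact Kk|].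
      intros r inr Hkr. apply far. eauto. }
    destruct new as [k [Kk far]].
    exists (k :: l). split; [cbn; lia|]. split; [intros r [<-|inr]; auto|].
    intros [|i] [|j] lt_i lt_j ne; cbn; [lia | | |].
    + apply far, nth_In. lia.
    + intros Hik. apply (far (nth i l (gone G))); [apply nth_In; lia|].
      now apply same_coset_sym.
    + apply distinct; lia.
Qed.

Lemma generates_nil_bounded (H : G -> Prop) : is_subgroup G H -> generates G [] ->
  ~ unbounded G H [] (fun _ => True).
Proof.
  intros subgroupH gen unb. destruct (unb 0) as [x [y [_ [_ far]]]]. apply far.
  assert (trivial : forall g, generated G [] g -> g = gone G).
  { induction 1 as [| ? ? _ _ [] | ? ? _ _ []]. reflexivity. }
  rewrite (trivial x (gen x)), (trivial y (gen y)).
  exists 0. split; [lia|]. now apply walk_nil, same_coset_refl.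
Qed.

End Narrow.

Theorem mainTheorem11 (G : Group) (H K : G -> Prop) :
  finitely_generated G ->
  is_subgroup G H -> is_subgroup G K -> (forall x, H x -> K x) ->
  narrow_coset_space G H ->
  finite_index G K \/ finite_index_in G K H.
Proof.
  intros _ subgroupH subgroupK H_sub_K [S [gen [unb narrow]]].
  destruct (classic (finite_index G K)) as [|infinite_GK]; [now left|].
  destruct (classic (finite_index_in G K H)) as [|infinite_KH]; [now right|].
  destruct (classic (S = [])) as [->|S_nonempty].
  { contradiction (generates_nil_bounded G H subgroupH gen unb). }
  destruct (narrow 1 (le_n 1)) as [L disjoint_fails].
  destruct (infinite_index_in_distinct_cosets G H K subgroupH infinite_KH (Datatypes.S L))
    as [l [len [inK distinct]]].
  assert (Kl : forall i, i <= L -> K (nth i l (gone G))).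
  { intros i le_i. apply inK, nth_In. lia. }
  destruct (disjoint_fails (fun i => cone G S K H (nth i l (gone G))))
    as [i [j [le_i [le_j [ne [x [xi xj]]]]]]].
  { intros i le_i. split; [|split].
    - apply cone_vertex_subset. exact subgroupH.
    - apply cone_unbounded; auto.
    - apply cone_coarsely_connected; auto. }
  contradiction (distinct i j ltac:(lia) ltac:(lia) ne).
  eapply cone_meet; eauto.
Qed.
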